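(* Suppose $\underline{\mathcal Z}\subseteq\ell^1(\mathcal Z)$. Then a linear functional $H:\underline{\mathcal Z}\to\mathcal Y$ has the $1$-weighted FMP if and only if it has a (proper) convolution representation $\underline\kappa$ satisfying $\lim_{t\to-\infty}\|\kappa_t\|_{op}=0$.
   Context: Let $(\mathcal Z,\|\cdot\|)$ and $(\mathcal Y,\|\cdot\|_{\mathcal Y})$ be normed vector spaces over $\mathbb R$ and $\mathcal B=\{z\in\mathcal Z:\|z\|\le1\}$. Let $\mathbb Z_-=\{0,-1,-2,\dots\}$; elements of $\mathcal Z^{\mathbb Z_-}$ are sequences $\underline z=(z_t)_{t\le0}$. For $t\in\mathbb Z_-$, $\delta^t:\mathcal Z\to\mathcal Z^{\mathbb Z_-}$ maps $z$ to the sequence whose entry at time $t$ is $z$ and all other entries are $0$. Standing assumption: $\underline{\mathcal Z}\subseteq\mathcal Z^{\mathbb Z_-}$ is a set such that (a) $\underline{\mathcal Z}$ is convex and $\underline{\mathcal Z}=\{-\underline z:\underline z\in\underline{\mathcal Z}\}$; (b) $\delta^t(\mathcal B)\subseteq\underline{\mathcal Z}$ for all $t\in\mathbb Z_-$; (c) for every $\underline z\in\underline{\mathcal Z}$ and every $J\subseteq\mathbb Z_-$, the sequence $\sum_{t\in J}\delta^t(z_t)$ (equal to $z_t$ at times $t\in J$ and $0$ elsewhere) belongs to $\underline{\mathcal Z}$. A functional $H:\underline{\mathcal Z}\to\mathcal Y$ is linear if it is the restriction of a linear map defined on the linear span of $\underline{\mathcal Z}$. $L(\mathcal Z,\mathcal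 Y)$ is the space of continuous linear maps $\mathcal Z\to\mathcal Y$ with operator norm $\|\cdot\|_{op}$. $H$ has a (proper) convolution representation if there is $\underline\kappa\in L(\mathcal Z,\mathcal Y)^{\mathbb Z_-}$ with $H(\underline z)=\lim_{T\to-\infty}\sum_{t=T}^0\kappa_t(z_t)$ and $\sum_{t\le0}\|\kappa_t(z_t)\|_{\mathcal Y}<\infty$ for all $\underline z\in\underline{\mathcal Z}$. $\ell^1(\mathcal Z)$ is the set of $\underline z$ with $\|\underline z\|_1=\sum_{t\le0}\|z_t\|<\infty$. A weighting sequence is a monotone $\underline w\in(0,1]^{\mathbb Z_-}$ with $w_t\to0$ as $t\to-\infty$; $\|\underline z\|_{1,\underline w}=\sum_{t\le0}w_t\|z_t\|$. $H$ has the $1$-weighted FMP if $\underline{\mathcal Z}\subseteq\ell^1(\mathcal Z)$ and there exists a weighting sequence $\underline w$ such that $H$ is continuous for the topology induced by $\|\cdot\|_{1,\underline w}$. *)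

(* Sequences indexed by Z_- = {0,-1,-2,...} are
   encoded as functions nat -> Z, the entry at time t <= 0 being (z (-t)). *)
From HB Require Import structures.
From mathcomp Require Import all_boot all_order all_algebra.
From mathcomp Require Import all_classical all_reals all_analysis.
Set Implicit Arguments. Unset Strict Implicit. Unset Printing Implicit Defensive.
Import Order.TTheory GRing.Theory Num.Theory numFieldNormedType.Exports.
Local Open Scope classical_set_scope.
Local Open Scope ring_scope.

Section Defs.
Variables (R : realType) (Z Y : normedModType R).

(* delta^t z : entry z at time t (index n = -t), 0 elsewhere *)
Definition delta (t : nat) (z : Z) : nat -> Z :=
  fun n => if n == t then z else 0.

Definition standing_assumption (S : set (nat -> Z)) : Prop :=
  [/\ (forall x y (l : R), S x -> S y -> 0 <= l <= 1 ->
          S (fun n => l *: x n + (1 - l) *: y n)),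
      (forall x, S x -> S (fun n => - x n)),
      (forall (t : nat) (z : Z), `|z| <= 1 -> S (delta t z)) &
      (forall x (J : pred nat), S x -> S (fun n => if J n then x n else 0))].

Definition span (S : set (nat -> Z)) : set (nat -> Z) :=
  fun x => exists (k : nat) (a : 'I_k -> R) (v : 'I_k -> nat -> Z),
    (forall i, S (v i)) /\ x = (fun n => \sum_(i < k) a i *: v i n).

Definition linear_on (S : set (nat -> Z)) (H : (nat -> Z) -> Y) : Prop :=
  exists L : (nat -> Z) -> Y,
    (forall x y, span S x -> span S y ->
        L (fun n => x n + y n) = L x + L y) /\
    (forall (a : R) x, span S x -> L (fun n => a *: x n) = a *: L x) /\
    (forall x, S x -> H x = L x).

Definition ell1 : set (nat -> Z) := fun z => cvgn [series `|z n|]_n.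

(* weighting sequence: values in (0,1], monotone (necessarily nonincreasing
   in n = -t), tending to 0 as t -> -oo *)
Definition weighting (w : nat -> R) : Prop :=
  [/\ (forall n, 0 < w n <= 1),
      (forall m n, (m <= n)%N -> w n <= w m) &
      w @ \oo --> 0].

Definition wnorm (w : nat -> R) (z : nat -> Z) : R :=
  limn [series w n * `|z n|]_n.

Definition wcontinuous_on (w : nat -> R) (S : set (nat -> Z))
    (H : (nat -> Z) -> Y) : Prop :=
  forall z0, S z0 -> forall eps : R, 0 < eps -> exists2 d : R, 0 < d &
    forall z, S z -> wnorm w (fun n => z n - z0 n) < d -> `|H z - H z0| < eps.

Definition weighted_FMP1 (S : set (nat -> Z)) (H : (nat -> Z) -> Y) : Prop :=
  S `<=` ell1 /\ exists w, weighting w /\ wcontinuous_on w S H.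

Definition opnorm (f : Z -> Y) : R := sup [set `|f z| | z in [set z | `|z| <= 1]].

Definition conv_rep (S : set (nat -> Z)) (H : (nat -> Z) -> Y)
    (k : nat -> Z -> Y) : Prop :=
  (forall t, linear (k t) /\ continuous (k t)) /\
  forall z, S z ->
    [series k n (z n)]_n @ \oo --> H z /\ cvgn [series `|k n (z n)|]_n.

End Defs.
Arguments ell1 {R Z}.

From Pilot Require Import Defs.
From HB Require Import structures.
From mathcomp Require Import all_boot all_order all_algebra.
From mathcomp Require Import all_classical all_reals all_analysis.
Import Order.TTheory GRing.Theory Num.Theory numFieldNormedType.Exports.
Local Open Scope classical_set_scope.
Local Open Scope ring_scope.
Set Implicit Arguments. Unset Strict Implicit. Unset Printing Implicit Defensive.

(* (<=) If the operator norms of the kernel tend to 0, their running suprema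
   sup_{m >= n} |k_m| form a nonincreasing null sequence; adding a harmonic
   term (for positivity) and normalising gives a weighting sequence w with
   |k_n| <= C w_n, and the convolution formula then yields
   |H z - H z'| <= C |z - z'|_{1,w}.
   (=>) Let L be the linear extension of H and k_n = L o delta^n. Since
   |delta^n z|_{1,w} <= w_n |z|, continuity of H at 0 for the weighted norm
   bounds all k_n uniformly and, as w_n -> 0, forces |k_n| -> 0. The partial
   sums of the convolution are the values of H at the truncations of z, whose
   weighted distance to z is at most an l^1 tail of z; hence they tend to H z. *)

Section LinearMaps.
Variables (R : realType) (Z Y : normedModType R) (f : Z -> Y).
Hypothesis f_linear : linear f.

Lemma linear_map0 : f 0 = 0.
Proof. by have := f_linear (-1) 0 0; rewrite scaler0 addr0 scaleN1r addNr. Qed.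

Lemma linear_mapZ a u : f (a *: u) = a *: f u.
Proof. by have := f_linear a u 0; rewrite !addr0 linear_map0 addr0. Qed.

Lemma linear_mapD u v : f (u + v) = f u + f v.
Proof. by have := f_linear 1 u v; rewrite !scale1r. Qed.

Lemma linear_mapB u v : f (u - v) = f u - f v.
Proof. by rewrite linear_mapD -scaleN1r linear_mapZ scaleN1r. Qed.

Lemma linear_norm_le M : (forall x, `|x| <= 1 -> `|f x| <= M) ->
  forall z, `|f z| <= M * `|z|.
Proof.
move=> fM z; have [->|z0] := eqVneq z 0; first by rewrite linear_map0 !normr0 mulr0.
have nz : 0 < `|z| by rewrite normr_gt0.
have zE : z = `|z| *: (`|z|^-1 *: z) by rewrite scalerA mulfV ?gt_eqF // scale1r.
rewrite {1}zE linear_mapZ normrZ normr_id mulrC ler_pM2r //.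
by apply: fM; rewrite normrZ normfV normr_id mulVf ?gt_eqF.
Qed.

Lemma linear_norm_le_inv r : 0 < r -> (forall x, `|x| <= r -> `|f x| <= 1) ->
  forall z, `|f z| <= r^-1 * `|z|.
Proof.
move=> r0 fr; apply: linear_norm_le => x x1.
rewrite -(ler_pM2l r0) mulfV ?gt_eqF // -[r in r * _]ger0_norm ?(ltW r0) //.
by rewrite -normrZ -linear_mapZ fr // normrZ ger0_norm ?ler_piMr ?(ltW r0).
Qed.

Lemma lipschitz_linear_continuous C : 0 <= C ->
  (forall z, `|f z| <= C * `|z|) -> continuous f.
Proof.
move=> C0 fC x; apply/cvgrPdist_lt => e e0; apply/nbhs_ballP.
exists (e / (C + 1)) => /=; first by rewrite divr_gt0 // ltr_wpDl.
move=> y; rewrite -ball_normE /= => xy.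
rewrite -linear_mapB; apply: le_lt_trans (fC _) _.
apply: (@le_lt_trans _ _ ((C + 1) * `|x - y|)); first by rewrite ler_wpM2r // lerDl.
by rewrite mulrC -ltr_pdivlMr // ltr_wpDl.
Qed.

Lemma continuous_linear_lipschitz : continuous f ->
  exists2 C, 0 < C & forall z, `|f z| <= C * `|z|.
Proof.
move=> f_cont; have /cvgrPdist_lt/(_ 1 ltr01)/nbhs_ballP[r /= r0 hr] := f_cont 0.
have r20 : 0 < r / 2 by rewrite divr_gt0.
exists (r / 2)^-1; first by rewrite invr_gt0.
apply: linear_norm_le_inv => // x xr.
rewrite -[f x]subr0 -linear_map0 distrC ltW //.
apply: hr; rewrite -ball_normE /= sub0r normrN; apply: le_lt_trans xr _.
by rewrite ltr_pdivrMr // ltr_pMr // ltr1n.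
Qed.

Lemma opnorm_le M : (forall z, `|z| <= 1 -> `|f z| <= M) -> opnorm f <= M.
Proof.
move=> fM; apply: ge_sup; first by exists `|f 0|, 0 => //=; rewrite normr0.
by move=> _ [z /= z1 <-]; exact: fM.
Qed.

Hypothesis f_cont : continuous f.

Let unit_ball_image_ubound :
  has_ubound [set `|f z| | z in [set z | `|z| <= 1]].
Proof.
have [C C0 fC] := continuous_linear_lipschitz f_cont.
exists C => _ [z /= z1 <-]; apply: le_trans (fC z) _.
by rewrite ler_piMr // ltW.
Qed.

Lemma opnorm_ge0 : 0 <= opnorm f.
Proof.
apply: le_trans (ub_le_sup unit_ball_image_ubound _); first exact: (normr_ge0 (f 0)).
by exists 0 => //=; rewrite normr0.
Qed.

Lemma ler_opnorm z : `|f z| <= opnorm f * `|z|.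
Proof.
apply: linear_norm_le => x x1.
apply: ub_le_sup; [exact: unit_ball_image_ubound | by exists x].
Qed.

End LinearMaps.

Section NonnegativeSeries.
Variables (R : realType) (u : R^nat).
Hypothesis u_ge0 : forall n, 0 <= u n.

Lemma nnseries_le_limn N : cvgn (series u) -> series u N <= limn (series u).
Proof. by move=> u_cvg; apply: nondecreasing_cvgn_le => //; exact: nondecreasing_series. Qed.

Lemma limn_nnseries_le B : (forall N, series u N <= B) -> limn (series u) <= B.
Proof.
move=> uB; apply: limr_le; last exact: nearW.
by apply: nondecreasing_is_cvgn; [exact: nondecreasing_series | exists B => _ [N _ <-]].
Qed.

End NonnegativeSeries.

Lemma series_tail (R : realType) (a : R^nat) N M :
  \sum_(0 <= m < M + N) (if (m < N)%N then 0 else a m) = series a (M + N) - series a N.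
Proof.
rewrite (big_cat_nat _ (leq_addl M N)) //= big1_seq ?add0r; last first.
  by move=> m /andP[_]; rewrite mem_index_iota => /andP[_ ->].
rewrite series_addn addrAC subrr add0r.
by apply: eq_big_nat => m /andP[Nm _]; rewrite ltnNge Nm.
Qed.

Section Sequences.
Variables (R : realType) (Z : normedModType R).

Lemma delta0 t : delta t (0 : Z) = (fun _ => 0).
Proof. by apply/funext => n; rewrite /delta; case: ifP. Qed.

Definition truncate (N : nat) (z : nat -> Z) : nat -> Z :=
  fun n => if (n < N)%N then z n else 0.

Lemma truncateS N z : truncate N.+1 z = (fun n => truncate N z n + delta N (z N) n).
Proof.
apply/funext => n; rewrite /truncate /delta ltnS leq_eqVlt.
by case: eqVneq => [->|_]; rewrite ?ltnn ?addr0 ?add0r //; case: ifP.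
Qed.

Lemma ell1B (z z0 : nat -> Z) : ell1 z -> ell1 z0 -> ell1 (fun n => z n - z0 n).
Proof.
move=> z1 z01; apply: (series_le_cvg _ _ _ (is_cvg_seriesD z1 z01)) => n /=.
- by [].
- by rewrite addr_ge0.
- exact: ler_normB.
Qed.

Lemma sub_span (S : set (nat -> Z)) : S `<=` Defs.span S.
Proof.
move=> x Sx; exists 1%N, (fun _ => 1), (fun _ => x); split => //.
by apply/funext => n; rewrite big_ord1 scale1r.
Qed.

End Sequences.

Section WeightedNorm.
Variables (R : realType) (Z : normedModType R) (w : R^nat).
Hypotheses (w_ge0 : forall n, 0 <= w n) (w_le1 : forall n, w n <= 1).

Lemma weighted_series_cvg (z : nat -> Z) : ell1 z -> cvgn [series w n * `|z n|]_n.
Proof.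
move=> z1; apply: (series_le_cvg _ _ _ z1) => n /=.
- by rewrite mulr_ge0.
- by [].
- by rewrite ler_piMl.
Qed.

Lemma wnorm_delta_le t (z : Z) : wnorm w (delta t z) <= w t * `|z|.
Proof.
apply: limn_nnseries_le => [n|N]; first by rewrite mulr_ge0.
rewrite /series /= (eq_bigr (fun m => if m == t then w m * `|z| else 0)); last first.
  by move=> m _; rewrite /delta; case: eqP; rewrite ?normr0 ?mulr0.
by rewrite -big_mkcond big_nat1_eq; case: ifP; rewrite // mulr_ge0.
Qed.

Lemma wnorm_truncate_le N (z : nat -> Z) : ell1 z ->
  wnorm w (fun n => truncate N z n - z n) <=
  limn [series `|z n|]_n - [series `|z n|]_n N.
Proof.
move=> z1; apply: limn_nnseries_le => [n|M]; first by rewrite mulr_ge0.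
apply: le_trans (_ : \sum_(0 <= m < M + N) (if (m < N)%N then 0 else `|z m|) <= _).
  rewrite /series /= (big_cat_nat _ (leq_addr N M)) //= -[X in X <= _]addr0 lerD //.
    apply: ler_sum => m _; rewrite /truncate; case: ifP => _.
      by rewrite subrr normr0 mulr0.
    by rewrite sub0r normrN ler_piMl.
  by apply: sumr_ge0 => m _; case: ifP.
by rewrite series_tail lerB // nnseries_le_limn.
Qed.

End WeightedNorm.

Lemma dominating_weighting (R : realType) (u : R^nat) :
  (forall n, 0 <= u n) -> u @ \oo --> 0 ->
  exists2 C, 0 < C & exists w, weighting w /\ forall n, u n <= C * w n.
Proof.
move=> u_ge0 u_cvg0; pose a := sups u.
have u_ub : has_ubound (range u).
  by apply/bounded_fun_has_ubound/cvg_seq_bounded/cvg_ex; exists 0.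
have u_le_a n : u n <= a n.
  apply: ub_le_sup; last by exists n => /=.
  by case: u_ub => M uM; exists M => _ [m _ <-]; apply: uM; exists m.
have a_ge0 n : 0 <= a n := le_trans (u_ge0 n) (u_le_a n).
have a_noninc : nonincreasing_seq a := nonincreasing_sups u_ub.
pose C := a 0%N + 2; have C0 : 0 < C by rewrite ltr_wpDl.
exists C => //; exists (fun n => (a n + harmonic n) / C); split; last first.
  by move=> n; rewrite mulrC divfK ?gt_eqF // (le_trans (u_le_a n)) // lerDl /= invr_ge0.
split.
- move=> n; rewrite divr_gt0 ?ltr_wpDl //= ler_pdivrMr // mul1r /C lerD //.
    exact: a_noninc.
  by rewrite (le_trans (_ : _ <= 1)) ?ler1n // invr_le1 ?ler1n ?unitfE ?pnatr_eq0.
- move=> m n mn; rewrite ler_pM2r ?invr_gt0 // lerD //; first exact: a_noninc.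
  by rewrite /= lef_pV2 ?posrE ?ler_nat.
- rewrite -(mul0r C^-1) -(addr0 0); apply: cvgMr_tmp; apply: cvgD cvg_harmonic.
  exact: cvg_sups.
Qed.

Section ConvolutionLipschitz.
Variables (R : realType) (Z Y : normedModType R).
Variables (S : set (nat -> Z)) (H : (nat -> Z) -> Y) (k : nat -> Z -> Y).
Variables (w : R^nat) (C : R).
Hypotheses (S_ell1 : S `<=` ell1) (H_conv : conv_rep S H k).
Hypotheses (w_ge0 : forall n, 0 <= w n) (w_le1 : forall n, w n <= 1).
Hypotheses (C_ge0 : 0 <= C) (k_le : forall n z, `|k n z| <= C * w n * `|z|).

Lemma conv_rep_wnorm_le z z0 : S z -> S z0 ->
  `|H z - H z0| <= C * wnorm w (fun n => z n - z0 n).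
Proof.
move=> Sz Sz0; have [k_lin k_series] := H_conv.
have [z_cvg _] := k_series z Sz; have [z0_cvg _] := k_series z0 Sz0.
have diff_cvg : [series k n (z n - z0 n)]_n @ \oo --> H z - H z0.
  rewrite (_ : [series _]_n = [series k n (z n)]_n - [series k n (z0 n)]_n).
    exact: cvgB.
  apply/funext => N; rewrite /series /= fctE -sumrB; apply: eq_bigr => n _.
  by rewrite linear_mapB //; case: (k_lin n).
apply: (ler_cvg_to (cvg_norm diff_cvg) (cvg_cst _)); apply: nearW => N /=.
apply: le_trans (ler_norm_sum _ _ _) _.
apply: le_trans (_ : \sum_(0 <= n < N) C * (w n * `|z n - z0 n|) <= _).
  by apply: ler_sum => n _; rewrite mulrA k_le.
rewrite -mulr_sumr ler_wpM2l //; apply: (nnseries_le_limn (u := fun n => _)).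
  by move=> n; rewrite mulr_ge0.
exact/weighted_series_cvg/(ell1B (S_ell1 Sz) (S_ell1 Sz0)).
Qed.

End ConvolutionLipschitz.

Lemma wnorm_lipschitz_wcontinuous (R : realType) (Z Y : normedModType R)
    (S : set (nat -> Z)) (H : (nat -> Z) -> Y) (w : R^nat) (C : R) : 0 < C ->
  (forall z z0, S z -> S z0 -> `|H z - H z0| <= C * wnorm w (fun n => z n - z0 n)) ->
  wcontinuous_on w S H.
Proof.
move=> C0 HC z0 Sz0 e e0; exists (e / C); first by rewrite divr_gt0.
by move=> z Sz wz; apply: le_lt_trans (HC _ _ Sz Sz0) _; rewrite mulrC -ltr_pdivlMr.
Qed.

Lemma conv_rep_weighted_FMP1 (R : realType) (Z Y : normedModType R)
    (S : set (nat -> Z)) (H : (nat -> Z) -> Y) (k : nat -> Z -> Y) :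
  S `<=` ell1 -> conv_rep S H k -> opnorm (k n) @[n --> \oo] --> 0 ->
  weighted_FMP1 S H.
Proof.
move=> S_ell1 H_conv k_cvg0; split => //.
have [k_lin _] := H_conv.
have opnorm_ge0_k n : 0 <= opnorm (k n) by case: (k_lin n) => *; exact: opnorm_ge0.
have [C C0 [w [w_weight k_le_w]]] := dominating_weighting opnorm_ge0_k k_cvg0.
have [w_01 _ _] := w_weight.
exists w; split => //; apply: (wnorm_lipschitz_wcontinuous C0).
apply: (conv_rep_wnorm_le S_ell1 H_conv _ _ (ltW C0)) => [n|n|n z].
- by have /andP[/ltW] := w_01 n.
- by have /andP[] := w_01 n.
- have [kn_lin kn_cont] := k_lin n.
  by apply: le_trans (ler_opnorm kn_lin kn_cont z) _; rewrite ler_wpM2r.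
Qed.

Section KernelOfFMP.
Variables (R : realType) (Z Y : normedModType R).
Variables (S : set (nat -> Z)) (H L : (nat -> Z) -> Y) (w : R^nat).
Hypotheses (S_delta : forall t (z : Z), `|z| <= 1 -> S (delta t z))
  (S_truncate : forall N x, S x -> S (truncate N x)) (S_ell1 : S `<=` ell1).
Hypotheses
  (L_add : forall x y, Defs.span S x -> Defs.span S y -> L (fun n => x n + y n) = L x + L y)
  (L_scale : forall a x, Defs.span S x -> L (fun n => a *: x n) = a *: L x)
  (H_L : forall x, S x -> H x = L x).
Hypotheses (w_ge0 : forall n, 0 <= w n) (w_le1 : forall n, w n <= 1)
  (w_cvg0 : w @ \oo --> 0) (H_wcont : wcontinuous_on w S H).

(* [L], not [H]: [delta t z] need not lie in [S] when [|z| > 1]. *)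
Definition kernel t (z : Z) : Y := L (delta t z).

Lemma span_delta t z : Defs.span S (delta t z).
Proof.
have z1_gt0 : 0 < `|z| + 1 by rewrite ltr_wpDl.
exists 1%N, (fun _ => `|z| + 1), (fun _ => delta t ((`|z| + 1)^-1 *: z)); split.
  move=> _; apply: S_delta; rewrite normrZ normfV ger0_norm ?(ltW z1_gt0) //.
  by rewrite mulrC ler_pdivrMr // mul1r lerDl.
apply/funext => n; rewrite big_ord1 /delta; case: ifP => _; last by rewrite scaler0.
by rewrite scalerA mulfV ?gt_eqF // scale1r.
Qed.

Lemma S_zero : S (fun _ => 0).
Proof. by rewrite -(delta0 Z 0); apply: S_delta; rewrite normr0. Qed.

Lemma L_zero : L (fun _ => 0) = 0.
Proof.
rewrite -(scale0r (L (fun _ => 0))) -(L_scale 0 (sub_span S_zero)).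
by congr L; apply/funext => n; rewrite scaler0.
Qed.

Lemma kernel_linear t : linear (kernel t).
Proof.
move=> a u v; rewrite /kernel.
have -> : delta t (a *: u + v) = (fun n => delta t (a *: u) n + delta t v n).
  by apply/funext => n; rewrite /delta; case: ifP; rewrite ?addr0.
rewrite (L_add (span_delta _ _) (span_delta _ _)).
have -> : delta t (a *: u) = (fun n => a *: delta t u n).
  by apply/funext => n; rewrite /delta; case: ifP; rewrite ?scaler0.
by rewrite (L_scale _ (span_delta _ _)).
Qed.

Lemma kernelE t z : `|z| <= 1 -> kernel t z = H (delta t z).
Proof. by move=> z1; rewrite (H_L (S_delta _ z1)). Qed.

Lemma kernel_small e : 0 < e -> exists2 d, 0 < d &
  forall t z, `|z| <= 1 -> w t * `|z| < d -> `|kernel t z| < e.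
Proof.
move=> e0; have [d d0 Hd] := H_wcont S_zero e0; exists d => // t z z1 wz.
rewrite kernelE // -[H _]subr0 -L_zero -(H_L S_zero); apply: Hd; first exact: S_delta.
rewrite (_ : (fun n => _) = delta t z); last by apply/funext => n; rewrite subr0.
exact: le_lt_trans (wnorm_delta_le w_ge0 _ _) wz.
Qed.

Lemma kernel_lipschitz : exists2 C, 0 <= C & forall t z, `|kernel t z| <= C * `|z|.
Proof.
have [d d0 Hd] := kernel_small ltr01; pose c := Num.min (d / 2) 1.
have c0 : 0 < c by rewrite lt_min ltr01 divr_gt0.
have cd : c < d by rewrite gt_min ltr_pdivrMr // ltr_pMr // ltr1n.
exists c^-1; first by rewrite invr_ge0 ltW.
move=> t; apply: (linear_norm_le_inv (kernel_linear t) c0) => x xc.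
apply/ltW/Hd; first by rewrite (le_trans xc) // ge_min lexx orbT.
by rewrite (le_lt_trans _ cd) // (le_trans _ xc) // ler_piMl.
Qed.

Lemma kernel_continuous t : continuous (kernel t).
Proof.
have [C C0 kC] := kernel_lipschitz.
exact (lipschitz_linear_continuous (kernel_linear t) C0 (kC t)).
Qed.

Lemma opnorm_kernel_cvg0 : opnorm (kernel n) @[n --> \oo] --> 0.
Proof.
apply/cvgrPdist_le => e e0; have [d d0 Hd] := kernel_small e0.
move: w_cvg0 => /cvgrPdist_lt/(_ d d0); apply: filterS => n.
rewrite !sub0r !normrN (ger0_norm (w_ge0 n)) => wd.
rewrite (ger0_norm (opnorm_ge0 (kernel_linear n) (@kernel_continuous n))).
apply: opnorm_le => z z1; apply/ltW/Hd => //.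
by rewrite (le_lt_trans _ wd) // ler_piMr ?w_ge0.
Qed.

Lemma kernel_partial_sum z N : S z -> [series kernel n (z n)]_n N = H (truncate N z).
Proof.
move=> Sz; rewrite (H_L (S_truncate N Sz)); elim: N => [|N IH].
  by rewrite /series /= big_geq // -L_zero.
rewrite seriesSr IH /kernel -L_add ?truncateS //; last exact: span_delta.
exact/sub_span/S_truncate.
Qed.

Lemma kernel_series_cvg z : S z -> [series kernel n (z n)]_n @ \oo --> H z.
Proof.
move=> Sz; apply/cvgrPdist_lt => e e0; have [d d0 Hd] := H_wcont Sz e0.
have /cvgrPdist_lt/(_ d d0) := S_ell1 Sz; apply: filterS => N tail_lt_d.
rewrite kernel_partial_sum // distrC; apply: Hd; first exact: S_truncate.
apply: le_lt_trans (wnorm_truncate_le w_ge0 w_le1 _ (S_ell1 Sz)) _.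
exact: le_lt_trans (ler_norm _) tail_lt_d.
Qed.

Lemma kernel_series_norm_cvg z : S z -> cvgn [series `|kernel n (z n)|]_n.
Proof.
move=> Sz; have [C C0 kC] := kernel_lipschitz.
apply: (series_le_cvg _ _ _ (is_cvg_seriesZ (k := C) (S_ell1 Sz))) => n /=.
- by [].
- by rewrite mulr_ge0.
- exact: kC.
Qed.

Lemma kernel_conv_rep : conv_rep S H kernel.
Proof.
split=> [t|z Sz]; first by split; [exact: kernel_linear | exact: kernel_continuous].
by split; [exact: kernel_series_cvg | exact: kernel_series_norm_cvg].
Qed.

End KernelOfFMP.

Lemma weighted_FMP1_conv_rep (R : realType) (Z Y : normedModType R)
    (S : set (nat -> Z)) (H : (nat -> Z) -> Y) :
  standing_assumption S -> linear_on S H -> weighted_FMP1 S H ->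
  exists k : nat -> Z -> Y, conv_rep S H k /\ opnorm (k n) @[n --> \oo] --> 0.
Proof.
move=> [_ _ S_delta S_restrict] [L [L_add [L_scale H_L]]].
move=> [S_ell1 [w [[w_01 _ w_cvg0] H_wcont]]].
have w_ge0 n : 0 <= w n by have /andP[/ltW] := w_01 n.
have w_le1 n : w n <= 1 by have /andP[] := w_01 n.
have S_truncate N x : S x -> S (truncate N x) := S_restrict x (fun n => (n < N)%N).
exists (kernel L); split.
- exact: kernel_conv_rep S_delta S_truncate S_ell1 L_add L_scale H_L w_ge0 w_le1 H_wcont.
- exact: opnorm_kernel_cvg0 S_delta L_add L_scale H_L w_ge0 w_le1 w_cvg0 H_wcont.
Qed.

Unset Implicit Arguments.
Theorem proposition3p5 (R : realType) (Z Y : normedModType R)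
    (S : set (nat -> Z)) (H : (nat -> Z) -> Y) :
  standing_assumption S -> S `<=` ell1 -> linear_on S H ->
  (weighted_FMP1 S H <->
   exists k : nat -> Z -> Y, conv_rep S H k /\ opnorm (k n) @[n --> \oo] --> 0).
Proof.
move=> S_std S_ell1 H_lin; split; first exact: weighted_FMP1_conv_rep.
by case=> k [H_conv k_cvg0]; exact: conv_rep_weighted_FMP1 S_ell1 H_conv k_cvg0.
Qed.
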